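(* Let $(\Gamma,\rho)$ be a voltage graph with $\Gamma=(V,E)$ a rooted simple digraph on vertices $V=\{v_1,\dots,v_N\}$ and voltage group $G$ a point group in dimension $k$ (a finite subgroup of $\mathrm{O}(k)$). Write $\theta_{ij}:=\rho(e_{ij})$ for $e_{ij}\in E$, and let $a_{ij}>0$ be positive constants. Consider the $G$-clustering dynamics on $p=(x_1,\dots,x_N)\in\mathbb{R}^{kN}$, $x_i\in\mathbb{R}^k$: $$\dot x_i=\sum_{v_j\in\mathcal{N}^-(v_i)}a_{ij}\,(\theta_{ij}x_j-x_i),\qquad i=1,\dots,N.$$ Let $\{G_i\}_{v_i\in V}$ be the local groups and $\{G_i^*\}_{v_i\in V}$ the directed local groups of $(\Gamma,\rho)$. Suppose that $G_i=G_i^*$ for some (and hence any) root $v_i$ of $\Gamma$. Then for any initial condition $p(0)\in\mathbb{R}^{kN}$, the trajectory $p(t)$ converges exponentially fast to a configuration $p^*=(x_1^*,\dots,x_N^* )$ satisfying: (1) for each edge $e_{ij}\in E$, $x_i^*=\theta_{ij}x_j^*$; in particular $\|x_1^*\|=\dots=\|x_N^*\|$; (2) for each $v_i\in V$, $\theta x_i^*=x_i^*$ for all $\theta\in G_i$.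
   Context: Digraphs are simple (no self-loops, no multiple edges); $e_{ij}$ denotes the edge $v_i\to v_j$. $\mathcal{N}^-(v_i)=\{v_j: e_{ij}\in E\}$ is the set of out-neighbors of $v_i$. A voltage graph is a pair $(\Gamma,\rho)$ with $\rho:E\to G$, $G$ a finite group with identity $\mathbf{1}$. A semi-walk is an alternating sequence $w=v_{i_1}a_1v_{i_2}\dots a_{n-1}v_{i_n}$ ($n\ge1$) where each $a_j$ is either $e_{i_ji_{j+1}}$ or $e_{i_{j+1}i_j}$; it goes from $v_{i_1}$ to $v_{i_n}$, is closed if $v_{i_1}=v_{i_n}$, and is a walk if every $a_j=e_{i_ji_{j+1}}$. A path is a walk with pairwise distinct vertices. The net voltage is $f(w)=\bar\rho(a_1)\cdots\bar\rho(a_{n-1})$ with $\bar\rho(a_j)=\rho(a_j)$ if $a_j=e_{i_ji_{j+1}}$ and $\bar\rho(a_j)=\rho(a_j)^{-1}$ otherwise ($f=\mathbf{1}$ for the one-vertex semi-walk). The local group at $v_i$ is $G_i=\{f(w): w$ a closed semi-walk starting and ending at $v_i\}$; the directed local group is $G_i^*=\{f(w): w$ a closed walk starting and ending at $v_i\}$. $\Gamma$ is rooted if there is a vertex $v_r$ (a root) such that every vertex has a path to $v_r$. *)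

From HB Require Import structures.
From mathcomp Require Import all_boot all_order all_algebra.
From mathcomp Require Import all_classical all_reals all_analysis.
Set Implicit Arguments. Unset Strict Implicit. Unset Printing Implicit Defensive.
Import Order.TTheory GRing.Theory Num.Theory.
Import numFieldNormedType.Exports.
Local Open Scope ring_scope.

(* Vertices are 'I_N; the simple digraph is an irreflexive relation
   [e : rel 'I_N] with [e i j] meaning the edge e_ij : v_i -> v_j.
   The voltage assignment is [rho : 'I_N -> 'I_N -> 'M[R]_k], only
   meaningful on edges.  A semi-walk starting at [u] is encoded by the
   sequence of its steps [(w, b)]: [b = true] means the step traverses the
   edge e_{u w} forwards, [b = false] means it traverses e_{w u} backwards. *)
Section VoltageGraph.
Variables (R : realType) (N k : nat).
Variables (e : rel 'I_N) (rho : 'I_N -> 'I_N -> 'M[R]_k).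

Fixpoint semiwalk_ok (u : 'I_N) (s : seq ('I_N * bool)) : bool :=
  match s with
  | [::] => true
  | (w, b) :: s' => (if b then e u w else e w u) && semiwalk_ok w s'
  end.

Definition sw_end (u : 'I_N) (s : seq ('I_N * bool)) : 'I_N :=
  last u (map fst s).

Definition is_walk (s : seq ('I_N * bool)) : bool := all snd s.

Fixpoint sw_volt (u : 'I_N) (s : seq ('I_N * bool)) : 'M[R]_k :=
  match s with
  | [::] => 1%:M
  | (w, b) :: s' =>
      (if b then rho u w else invmx (rho w u)) *m sw_volt w s'
  end.

Definition local_group (i : 'I_N) (A : 'M[R]_k) : Prop :=
  exists s, [/\ semiwalk_ok i s, sw_end i s = i & sw_volt i s = A].

Definition dlocal_group (i : 'I_N) (A : 'M[R]_k) : Prop :=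
  exists s, [/\ semiwalk_ok i s, is_walk s, sw_end i s = i & sw_volt i s = A].

Definition is_path_from_to (i j : 'I_N) : Prop :=
  exists s, [/\ semiwalk_ok i s, is_walk s, uniq (i :: map fst s)
              & sw_end i s = j].

Definition is_root (r : 'I_N) : Prop := forall i, is_path_from_to i r.

Definition rooted : Prop := exists r, is_root r.

End VoltageGraph.

Definition point_group (R : realType) (k : nat) (G : seq 'M[R]_k) : Prop :=
  [/\ (1%:M : 'M[R]_k) \in G,
      (forall A B, A \in G -> B \in G -> A *m B \in G),
      (forall A, A \in G -> invmx A \in G)
    & (forall A, A \in G -> A *m A^T = 1%:M)].

From HB Require Import structures.
From mathcomp Require Import all_boot all_order all_algebra.
From mathcomp Require Import all_classical all_reals all_analysis.
From mathcomp Require Import ring lra.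
Import Order.TTheory GRing.Theory Num.Theory.
Import numFieldNormedType.Exports.
Local Open Scope ring_scope.
Local Open Scope classical_set_scope.

Set Implicit Arguments.
Unset Strict Implicit.
Unset Printing Implicit Defensive.

(* Fix for every vertex v_i a directed walk to the root r and call its voltage
   pi_i.  The local group H = G_r is a subgroup of the finite group G.  Lift the
   dynamics to the finite set V x H: the c-th coordinate of g pi_i^-1 x_i(t) at
   (v_i, g) follows a scalar linear consensus protocol along the lifted edges
   (v_i, g) -> (v_j, g pi_i^-1 theta_ij pi_j), whose loop voltages lie in H.
   Since G_r = G_r^*, every lifted vertex has a directed walk to (r, 1), and a
   consensus protocol with a globally reachable vertex converges exponentially:
   the maximum never increases, the minimum never decreases, and every L time
   units the spread shrinks by a fixed factor.  The common limit u is fixed by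
   H, so x_i^* = pi_i u is consistent along the edges and fixed by
   G_i = pi_i H pi_i^-1; the norms agree because G lies in O(k). *)

Section RealFunctions.
Variable R : realType.
Implicit Types (f : R -> R) (a b c t : R).

Lemma ler_sum_term (T : finType) (F : T -> R) i :
  (forall j, 0 <= F j) -> F i <= \sum_j F j.
Proof. by move=> F_ge0; rewrite (bigD1 i) //= lerDl sumr_ge0. Qed.

Lemma is_derive_sumseq (T : Type) (s : seq T) (F : T -> R -> R) (dF : T -> R) t :
  (forall i, is_derive t (1:R) (F i) (dF i)) ->
  is_derive t (1:R) (fun u => \sum_(i <- s) F i u) (\sum_(i <- s) dF i).
Proof.
move=> dFi; elim: s => [|i s IHs].
  rewrite big_nil; under [fun u => _]funext => u do rewrite big_nil.
  exact: is_derive_cst.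
rewrite big_cons; under [fun u => _]funext => u do rewrite big_cons.
exact: is_deriveD (dFi i) IHs.
Qed.

Lemma is_derive_affine a c t : is_derive t (1:R) (fun s => c * (s - a)) c.
Proof.
have := is_deriveZ c (is_deriveB (is_derive_id t (1:R)) (is_derive_cst a t 1)).
by rewrite subr0 [c *: 1]mulr1.
Qed.

Lemma is_derive_expR_affine a c t :
  is_derive t (1:R) (fun s => expR (c * (s - a))) (expR (c * (t - a)) * c).
Proof. exact: is_derive1_comp (is_derive_expR _) (is_derive_affine a c t). Qed.

Lemma ger0_is_derive_ler f (df : R -> R) a b :
  (forall s, is_derive s (1:R) f (df s)) ->
  (forall s, a <= s <= b -> 0 <= df s) -> a <= b -> f a <= f b.
Proof.
move=> f_df df_ge0 ab; apply: (@ger0_derive1_ndecr R f a b) => //.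
- move=> s; rewrite in_itv /= => /andP[sa sb].
  by rewrite derive1E (@derive_val _ _ _ _ _ _ _ (f_df s)) df_ge0 // !ltW.
- apply: continuous_subspaceT => s; apply: differentiable_continuous.
  exact/derivable1_diffP/(@ex_derive _ _ _ _ _ _ _ (f_df s)).
Qed.

Lemma is_derive_sq_remainder f t d C :
  (forall h, `|f (h + t) - f t - d * h| <= C * h ^+ 2) -> is_derive t (1:R) f d.
Proof.
move=> fC.
have C_ge0 : 0 <= C by have := fC 1; rewrite expr1n !mulr1; exact: le_trans (normr_ge0 _).
have quot_cvg : (fun h : R => h^-1 *: (f (h *: 1 + t) - f t)) @ 0^' --> d.
  apply/cvgrPdist_le => eps eps_gt0; near=> h.
  have h_neq0 : h != 0 by near: h; exact: nbhs_dnbhs_neq.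
  have h_small : `|h| <= eps / (C + 1).
    by near: h; apply: dnbhs0_le; rewrite divr_gt0 // ltr_wpDl.
  have -> : d - h^-1 *: (f (h *: 1 + t) - f t) = - (h^-1 * (f (h + t) - f t - d * h)).
    by rewrite -[h%:A]/(h * 1) mulr1 -[_ *: _]/(_ * _); field.
  have h_gt0 : 0 < `|h| by rewrite normr_gt0.
  rewrite normrN normrM normfV ler_pdivrMl //; apply: le_trans (fC h) _.
  have : `|h| * (C + 1) <= eps by rewrite -ler_pdivlMr ?ltr_wpDl.
  rewrite -(real_normK (num_real h)); nra.
apply: DeriveDef; first by apply/cvg_ex; exists d.
exact: cvg_lim quot_cvg.
Unshelve. all: by end_near.
Qed.

(* Summed over the vertices, this C^1 convex penalty is the Lyapunov function
   showing that upper bounds persist along a consensus solution. *)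
Definition sqrp (u : R) := (Num.max u 0) ^+ 2.

Lemma sqrp_ge0 u : 0 <= sqrp u.
Proof. exact: sqr_ge0. Qed.

Lemma sqrp_le0 u : sqrp u <= 0 -> u <= 0.
Proof.
rewrite /sqrp; case: (leP u 0) => // u_gt0.
by rewrite leNgt exprn_gt0.
Qed.

Lemma is_derive_sqrp u : is_derive u (1:R) sqrp (2 * Num.max u 0).
Proof.
apply: (@is_derive_sq_remainder _ _ _ 1) => h.
rewrite /sqrp mul1r ler_norml; case: (leP (h + u) 0) => hu; case: (leP u 0) => u0;
  rewrite ?(max_r hu) ?(max_r u0) ?(max_l (ltW hu)) ?(max_l (ltW u0));
  apply/andP; split; nra.
Qed.

Lemma sqrp_convex a b : 2 * Num.max a 0 * (b - a) <= sqrp b - sqrp a.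
Proof.
rewrite /sqrp; case: (leP a 0) => a0; case: (leP b 0) => b0;
  rewrite ?(max_r a0) ?(max_r b0) ?(max_l (ltW a0)) ?(max_l (ltW b0));
  have := sqr_ge0 (b - a); nra.
Qed.

Lemma gronwall_le0 (W dW : R -> R) C t0 t :
  (forall s, is_derive s (1:R) W (dW s)) -> (forall s, dW s <= C * W s) ->
  W t0 <= 0 -> t0 <= t -> W t <= 0.
Proof.
(* The integrating factor makes [- E s * W s] nondecreasing. *)
move=> W_dW dW_le W0 t0t; pose E s := expR (- C * (s - t0)).
have : - (E t0 * W t0) <= - (E t * W t).
  apply: (@ger0_is_derive_ler (fun s => - (E s * W s))
    (fun s => - (E s * dW s + W s * (E s * - C))) t0 t _ _ t0t) => s.
    exact: is_deriveN (is_deriveM (is_derive_expR_affine t0 (- C) s) (W_dW s)).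
  move=> _; have := dW_le s; have : 0 < E s := expR_gt0 _; nra.
have : 0 < E t := expR_gt0 _.
rewrite /E subrr mulr0 expR0 mul1r; nra.
Qed.

Lemma gronwall_lower_bound (z dz : R -> R) D b s0 s1 :
  (forall s, is_derive s (1:R) z (dz s)) -> 0 <= D -> 0 <= b ->
  (forall s, s0 <= s <= s1 -> b - D * z s <= dz s) -> s0 <= s1 ->
  expR (- D * (s1 - s0)) * (z s0 + b * (s1 - s0)) <= z s1.
Proof.
(* The integrating factor makes [E s * z s - b * (s - s0)] nondecreasing. *)
move=> z_dz D_ge0 b_ge0 dz_ge s01; pose E s := expR (D * (s - s0)).
have : E s0 * z s0 - b * (s0 - s0) <= E s1 * z s1 - b * (s1 - s0).
  apply: (@ger0_is_derive_ler (fun s => E s * z s - b * (s - s0))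
    (fun s => E s * dz s + z s * (E s * D) - b) s0 s1 _ _ s01) => s.
    exact: is_deriveB (is_deriveM (is_derive_expR_affine s0 D s) (z_dz s))
                      (is_derive_affine s0 b s).
  move=> /andP[s0s ss1]; have := dz_ge s; rewrite s0s ss1 => /(_ isT) dz_ges.
  have E_ge1 : 1 <= E s by rewrite -expR0 ler_expR mulr_ge0 // subr_ge0.
  nra.
rewrite /E subrr mulr0 expR0 mul1r => ineq.
have : z s0 + b * (s1 - s0) <= expR (D * (s1 - s0)) * z s1 by lra.
rewrite -(@ler_pM2l _ (expR (- D * (s1 - s0)))) ?expR_gt0 // mulrA -expRD.
by rewrite mulNr addNr expR0 mul1r.
Qed.

End RealFunctions.

Section Consensus.
Variables (R : realType) (I K : finType) (w : I -> K -> R) (nb : I -> K -> I).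
Hypothesis w_ge0 : forall n k, 0 <= w n k.
Implicit Types (y z : I -> R -> R) (t s u M m d : R).

Definition consensus_sol y := forall n t,
  is_derive t (1:R) (y n) (\sum_k w n k * (y (nb n k) t - y n t)).

Lemma consensus_solBl y M : consensus_sol y -> consensus_sol (fun n t => M - y n t).
Proof.
move=> y_sol n t.
suff -> : \sum_k w n k * (M - y (nb n k) t - (M - y n t)) =
          0 - \sum_k w n k * (y (nb n k) t - y n t).
  exact: is_deriveB (is_derive_cst M t 1) (y_sol n t).
by rewrite sub0r -sumrN; apply: eq_bigr => k _; ring.
Qed.

Lemma sqrp_drift_le y M s :
  \sum_n 2 * Num.max (y n s - M) 0 * (\sum_k w n k * (y (nb n k) s - y n s))
    <= (\sum_n \sum_k w n k) * \sum_n sqrp (y n s - M).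
Proof.
rewrite mulr_suml; apply: ler_sum => n _.
rewrite mulr_sumr mulr_suml; apply: ler_sum => k _.
rewrite mulrCA; apply: ler_wpM2l => //.
have -> : y (nb n k) s - y n s = (y (nb n k) s - M) - (y n s - M) by ring.
apply: le_trans (sqrp_convex _ _) _; rewrite lerBlDr.
apply: le_trans (@ler_sum_term _ _ (fun i => sqrp (y i s - M)) (nb n k) _) _.
  by move=> i; exact: sqrp_ge0.
by rewrite lerDl sqrp_ge0.
Qed.

Lemma consensus_sol_ub y (t0 : R) M : consensus_sol y -> (forall n, y n t0 <= M) ->
  forall t, t0 <= t -> forall n, y n t <= M.
Proof.
move=> y_sol yM t t0t n; rewrite -subr_le0; apply: sqrp_le0.
apply: le_trans (@ler_sum_term _ _ (fun i => sqrp (y i t - M)) n _) _.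
  by move=> i; exact: sqrp_ge0.
apply: (@gronwall_le0 _ (fun s => \sum_i sqrp (y i s - M))
  (fun s => \sum_i 2 * Num.max (y i s - M) 0 * (\sum_k w i k * (y (nb i k) s - y i s)))
  (\sum_i \sum_k w i k) t0) => // [s||].
- apply: is_derive_sumseq => i.
  have := is_derive1_comp (is_derive_sqrp _) (is_deriveB (y_sol i s) (is_derive_cst M s 1)).
  by rewrite subr0.
- exact: sqrp_drift_le.
- by rewrite big1 // => i _; rewrite /sqrp max_r ?expr0n // subr_le0.
Qed.

Lemma consensus_sol_lb y (t0 : R) m : consensus_sol y -> (forall n, m <= y n t0) ->
  forall t, t0 <= t -> forall n, m <= y n t.
Proof.
move=> y_sol ym t t0t n; rewrite -lerN2 -[- y n t]sub0r -[- m]sub0r.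
apply: (consensus_sol_ub (consensus_solBl 0 y_sol) _ t0t) => i.
by rewrite lerD2l lerN2.
Qed.

Fixpoint reachn (hub : I) (l : nat) (n : I) : Prop :=
  match l with
  | 0 => n = hub
  | l'.+1 => exists k, 0 < w n k /\ reachn hub l' (nb n k)
  end.

Section Contraction.
Variables (hub : I) (L : nat) (alpha D : R).
Hypothesis alpha_gt0 : 0 < alpha.
Hypothesis alpha_le : forall n k, 0 < w n k -> alpha <= w n k.
Hypothesis D_ge0 : 0 <= D.
Hypothesis D_ge : forall n, \sum_k w n k <= D.
Hypothesis reach : forall n, exists l, (l <= L)%N /\ reachn hub l n.

(* Each step of a walk to the hub passes on at least this fraction of a gap
   M - y: edge weights are at least alpha and gaps decay at rate at most D. *)
Definition rate := Num.min 1 (alpha * expR (- D * L%:R)).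

Lemma rate_gt0 : 0 < rate.
Proof. by rewrite lt_min ltr01 mulr_gt0 // expR_gt0. Qed.

Lemma rate_le1 : rate <= 1.
Proof. by rewrite ge_min lexx. Qed.

Lemma rate_le : rate <= alpha * expR (- D * L%:R).
Proof. by rewrite ge_min lexx orbT. Qed.

Lemma consensus_drift_lb z n s : (forall i, 0 <= z i s) ->
  \sum_k w n k * z (nb n k) s - D * z n s <= \sum_k w n k * (z (nb n k) s - z n s).
Proof.
move=> z_ge0.
have -> : \sum_k w n k * (z (nb n k) s - z n s) =
          \sum_k w n k * z (nb n k) s - (\sum_k w n k) * z n s.
  by rewrite mulr_suml -sumrB; apply: eq_bigr => k _; ring.
by rewrite lerD2l lerN2 ler_wpM2r.
Qed.

Lemma consensus_decay_lb z n (u0 : R) s : consensus_sol z ->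
  (forall i u, u0 <= u -> 0 <= z i u) -> u0 <= s ->
  expR (- D * (s - u0)) * z n u0 <= z n s.
Proof.
move=> z_sol z_ge0 u0s.
have := gronwall_lower_bound (z_sol n) D_ge0 (lexx 0) _ u0s.
rewrite mul0r addr0; apply=> u /andP[u0u _].
apply: le_trans (consensus_drift_lb n (fun i => z_ge0 i u u0u)).
rewrite sub0r -[X in X <= _]sub0r lerD2r.
by apply: sumr_ge0 => k _; rewrite mulr_ge0 ?z_ge0.
Qed.

Lemma consensus_reach_step z n k (u0 : R) s d : consensus_sol z ->
  (forall i u, u0 <= u -> 0 <= z i u) -> 0 < w n k -> 0 <= d ->
  (forall u, u0 <= u <= s -> d <= z (nb n k) u) ->
  u0 + 1 <= s -> s - u0 <= L%:R -> rate * d <= z n s.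
Proof.
move=> z_sol z_ge0 w_gt0 d_ge0 d_le u01s sL.
have u0s : u0 <= s by lra.
have ad_ge0 : 0 <= alpha * d := mulr_ge0 (ltW alpha_gt0) d_ge0.
have drift u : u0 <= u <= s ->
    alpha * d - D * z n u <= \sum_j w n j * (z (nb n j) u - z n u).
  move=> /andP[u0u us]; apply: le_trans (consensus_drift_lb n (fun i => z_ge0 i u u0u)).
  rewrite lerD2r; apply: le_trans (@ler_sum_term _ _ (fun j => w n j * z (nb n j) u) k _).
    by apply: ler_pM => //; [exact: ltW | exact: alpha_le | apply: d_le; rewrite u0u].
  by move=> j; rewrite mulr_ge0 ?z_ge0.
apply: le_trans (gronwall_lower_bound (z_sol n) D_ge0 ad_ge0 drift u0s).
set E := expR (- D * (s - u0)).
have E_gt0 : 0 < E := expR_gt0 _.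
apply: (@le_trans _ _ (alpha * E * d)).
  apply: ler_wpM2r => //; apply: le_trans rate_le _.
  by rewrite ler_pM2l // /E ler_expR !mulNr lerN2 ler_wpM2l.
have -> : alpha * E * d = E * (alpha * d) by ring.
rewrite ler_pM2l //.
have := z_ge0 n u0 (lexx u0); nra.
Qed.

Lemma consensus_reach_lb z (u0 : R) l n : consensus_sol z ->
  (forall i u, u0 <= u -> 0 <= z i u) -> reachn hub l n -> (l <= L)%N ->
  forall s, u0 + l%:R <= s <= u0 + L%:R ->
  rate ^+ l * expR (- D * L%:R) * z hub u0 <= z n s.
Proof.
move=> z_sol z_ge0; elim: l n => [|l IHl] n /=.
  move=> -> _ s /andP[u0s sL]; rewrite addr0 in u0s; rewrite expr0 mul1r.
  apply: le_trans (consensus_decay_lb hub z_sol z_ge0 u0s).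
  by rewrite ler_wpM2r ?z_ge0 // ler_expR !mulNr lerN2 ler_wpM2l //; lra.
move=> [k [w_gt0 reach_k]] lL s /andP[ls sL].
have lL' : (l.+1%:R : R) <= L%:R by rewrite ler_nat.
rewrite -natr1 in ls lL'.
rewrite exprS -!mulrA; apply: (@consensus_reach_step z n k (u0 + l%:R)) => //.
- by move=> i u lu; apply: z_ge0; apply: le_trans lu; rewrite lerDl.
- apply: mulr_ge0; first exact/exprn_ge0/ltW/rate_gt0.
  by apply: mulr_ge0; [exact/ltW/expR_gt0 | exact: z_ge0].
- move=> u /andP[lu us]; rewrite !mulrA; apply: IHl => //; first exact: ltnW.
  by rewrite lu (le_trans us sL).
- lra.
- have : (0 : R) <= l%:R := ler0n _ _; lra.
Qed.

Lemma consensus_window y t M : consensus_sol y -> (forall n, y n t <= M) ->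
  forall n, rate ^+ L * expR (- D * L%:R) * (M - y hub t) <= M - y n (t + L%:R).
Proof.
move=> y_sol yM n; have [l [lL reach_l]] := reach n.
have gap_ge0 i u : t <= u -> 0 <= M - y i u.
  by move=> tu; rewrite subr_ge0; apply: (consensus_sol_ub y_sol yM tu).
apply: le_trans (consensus_reach_lb (consensus_solBl M y_sol) gap_ge0 reach_l lL _); last first.
  by rewrite lerD2l ler_nat lL lexx.
rewrite /=; apply: ler_wpM2r; first exact: gap_ge0.
apply: ler_wpM2r; first exact/ltW/expR_gt0.
exact: (@ler_wiXn2l _ _ (ltW rate_gt0) rate_le1 L l lL).
Qed.

Definition cmax y t := \big[Num.max/y hub t]_n y n t.
Definition cmin y t := \big[Num.min/y hub t]_n y n t.
Definition spread y t := cmax y t - cmin y t.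

Lemma cmax_ge y t n : y n t <= cmax y t.
Proof. exact: le_bigmax. Qed.

Lemma cmin_le y t n : cmin y t <= y n t.
Proof. exact: bigmin_le. Qed.

Lemma cmax_le y t B : (forall n, y n t <= B) -> cmax y t <= B.
Proof. by move=> yB; apply: bigmax_le => // n _. Qed.

Lemma cmin_ge y t B : (forall n, B <= y n t) -> B <= cmin y t.
Proof. by move=> yB; apply: le_bigmin => // n _. Qed.

Lemma cmin_le_cmax y t : cmin y t <= cmax y t.
Proof. exact: le_trans (cmin_le y t hub) (cmax_ge y t hub). Qed.

Lemma cmax_nonincr y t s : consensus_sol y -> t <= s -> cmax y s <= cmax y t.
Proof. by move=> y_sol ts; apply/cmax_le/(consensus_sol_ub y_sol _ ts)/cmax_ge. Qed.

Lemma cmin_nondecr y t s : consensus_sol y -> t <= s -> cmin y t <= cmin y s.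
Proof. by move=> y_sol ts; apply/cmin_ge/(consensus_sol_lb y_sol _ ts)/cmin_le. Qed.

Lemma spread_ge0 y t : 0 <= spread y t.
Proof. by rewrite subr_ge0 cmin_le_cmax. Qed.

Lemma spread_nonincr y t s : consensus_sol y -> t <= s -> spread y s <= spread y t.
Proof. by move=> y_sol ts; rewrite lerB ?cmax_nonincr ?cmin_nondecr. Qed.

Definition beta := rate ^+ L * expR (- D * L%:R) / 2.

Lemma beta_gt0 : 0 < beta.
Proof. by rewrite divr_gt0 // mulr_gt0 ?expR_gt0 // exprn_gt0 // rate_gt0. Qed.

Lemma beta_le_half : beta <= 1 / 2.
Proof.
rewrite ler_pM2r // -[1]mulr1; apply: ler_pM.
- exact/exprn_ge0/ltW/rate_gt0.
- exact/ltW/expR_gt0.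
- exact: exprn_ile1 (ltW rate_gt0) rate_le1.
- by rewrite -expR0 ler_expR mulNr oppr_le0 mulr_ge0.
Qed.

Lemma spread_step y t : consensus_sol y ->
  spread y (t + L%:R) <= (1 - beta) * spread y t.
Proof.
move=> y_sol; rewrite /spread.
have tL : t <= t + L%:R by rewrite lerDl.
have ub := cmax_nonincr y_sol tL; have lb := cmin_nondecr y_sol tL.
have hub_m := cmin_le y t hub; have hub_M := cmax_ge y t hub.
have beta_pos := beta_gt0.
have twice_beta : rate ^+ L * expR (- D * L%:R) = 2 * beta by rewrite /beta; field.
case: (leP (y hub t) ((cmax y t + cmin y t) / 2)) => hub_mid.
- have : cmax y (t + L%:R) <= cmax y t - beta * (cmax y t - cmin y t).
    apply: cmax_le => n; have := consensus_window y_sol (cmax_ge y t) n.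
    rewrite twice_beta; nra.
  nra.
- have : cmin y t + beta * (cmax y t - cmin y t) <= cmin y (t + L%:R).
    apply: cmin_ge => n.
    have m_ub i : 0 - y i t <= - cmin y t by rewrite sub0r lerN2 cmin_le.
    have := consensus_window (consensus_solBl 0 y_sol) m_ub n.
    rewrite /= twice_beta !sub0r; nra.
  nra.
Qed.

Lemma spread_iter y N : consensus_sol y ->
  spread y (N%:R * L%:R) <= (1 - beta) ^+ N * spread y 0.
Proof.
move=> y_sol; elim: N => [|N IHN]; first by rewrite mul0r expr0 mul1r.
rewrite -natr1 mulrDl mul1r; apply: le_trans (spread_step _ y_sol) _.
rewrite exprS -mulrA ler_wpM2l //; have := beta_le_half; lra.
Qed.

Lemma spread_exp_decay y : consensus_sol y -> (0 < L)%N ->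
  exists C lam, 0 < lam /\ forall t, 0 <= t -> spread y t <= C * expR (- (lam * t)).
Proof.
move=> y_sol L_gt0; set q := 1 - beta.
have q_gt0 : 0 < q by have := beta_le_half; rewrite /q; lra.
have q_lt1 : q < 1 by have := beta_gt0; rewrite /q; lra.
have L_pos : (0 : R) < L%:R by rewrite ltr0n.
have lnq_lt0 : ln q < 0 by rewrite ln_lt0 // q_gt0 q_lt1.
set lam := - ln q / L%:R.
exists (spread y 0 / q), lam; split; first by rewrite divr_gt0 // oppr_gt0.
move=> t t_ge0; set N := Num.trunc (t / L%:R).
have NL : N%:R * L%:R <= t by rewrite -ler_pdivlMr // truncn_le divr_ge0 // ltW.
apply: le_trans (spread_nonincr y_sol NL) _; apply: le_trans (spread_iter N y_sol) _.
have -> : q ^+ N = expR (N%:R * ln q) by rewrite expRM_natl lnK // posrE.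
have : N%:R * ln q <= - (lam * t) - ln q.
  have -> : - (lam * t) - ln q = (t / L%:R - 1) * ln q by rewrite /lam; field; rewrite lt0r_neq0.
  rewrite ler_wnM2r ?ltW //; have := truncnS_gt (t / L%:R); rewrite -natr1 -/N; lra.
rewrite -ler_expR expRD expRN lnK ?posrE // => qN.
have -> : spread y 0 / q * expR (- (lam * t)) = expR (- (lam * t)) / q * spread y 0 by ring.
by apply: le_trans (ler_wpM2r (spread_ge0 y 0) qN) _.
Qed.

Lemma consensus_limit y : consensus_sol y -> exists c, forall t, cmin y t <= c <= cmax y t.
Proof.
move=> y_sol.
have cmin_le_cmax_any s t : cmin y s <= cmax y t.
  case: (leP s t) => st.
    exact: le_trans (cmin_nondecr y_sol st) (cmin_le_cmax y t).
  exact: le_trans (cmin_le_cmax y s) (cmax_nonincr y_sol (ltW st)).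
have cmin_sup : has_sup (range (cmin y)).
  split; first by exists (cmin y 0); exists 0.
  by exists (cmax y 0) => _ [s _ <-].
exists (sup (range (cmin y))) => t; apply/andP; split.
  by apply: sup_upper_bound => //; exists t.
by apply: ge_sup; [case: cmin_sup | move=> _ [s _ <-]].
Qed.

Lemma consensus_exp_cvg y : consensus_sol y -> (0 < L)%N ->
  exists c C lam, 0 < lam /\
    forall n t, 0 <= t -> `|y n t - c| <= C * expR (- (lam * t)).
Proof.
move=> y_sol L_gt0; have [c c_mM] := consensus_limit y_sol.
have [C [lam [lam_gt0 decay]]] := spread_exp_decay y_sol L_gt0.
exists c, C, lam; split=> // n t t_ge0; apply: le_trans (decay t t_ge0).
have := cmin_le y t n; have := cmax_ge y t n; have /andP[] := c_mM t.
rewrite /spread ler_norml; lra.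
Qed.

End Contraction.

Theorem consensus (hub : I) y : consensus_sol y ->
  (forall n, exists l, reachn hub l n) ->
  exists c C lam, 0 < lam /\
    forall n t, 0 <= t -> `|y n t - c| <= C * expR (- (lam * t)).
Proof.
move=> y_sol reach; have [len len_reach] := boolp.choice reach.
pose alpha := \big[Num.min/1]_(p : I * K | 0 < w p.1 p.2) w p.1 p.2.
pose D := \sum_n \sum_k w n k.
apply: (@consensus_exp_cvg hub (\max_n len n).+1 alpha D) => //.
- by apply: lt_bigmin => // p; case/andP.
- by move=> n k wnk; exact: (@bigmin_le_cond _ _ _ 1 (n, k) (fun p => 0 < w p.1 p.2)).
- by apply: sumr_ge0 => n _; exact: sumr_ge0.
- by move=> n; rewrite /D (bigD1 n) //= lerDl sumr_ge0 // => i _; exact: sumr_ge0.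
- by move=> n; exists (len n); rewrite leqW ?leq_bigmax.
Qed.
End Consensus.

Section MatrixAnalysis.
Variable R : realType.

Lemma mx_subE m n (A B : 'M[R]_(m, n)) i j : (A - B) i j = A i j - B i j.
Proof. by rewrite !mxE. Qed.

Lemma mx_entry_le_norm m n (M : 'M[R]_(m, n)) i j : `|M i j| <= `|M|.
Proof.
rewrite [`|M|]mx_normrE.
exact: (@le_bigmax _ _ _ 0 (fun ij : 'I_m * 'I_n => `|M ij.1 ij.2|) (i, j)).
Qed.

Lemma mx_norm_le m n (M : 'M[R]_(m, n)) B : 0 <= B ->
  (forall i j, `|M i j| <= B) -> `|M| <= B.
Proof. by move=> B_ge0 MB; rewrite [`|M|]mx_normrE; apply: bigmax_le => // ij _. Qed.

Lemma is_derive_mx_entry m n (f : R -> 'M[R]_(m, n)) df t i j :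
  is_derive t (1:R) f df -> is_derive t (1:R) (fun s => f s i j) (df i j).
Proof.
move=> [f_diff f_df].
have f_cvg : (fun h : R => h^-1 *: (f (h *: 1 + t) - f t)) @ 0^' --> df.
  by rewrite -f_df; exact: f_diff.
have fij_cvg : (fun h : R => h^-1 *: (f (h *: 1 + t) i j - f t i j)) @ 0^' --> df i j.
  apply/cvgrPdist_le => eps eps_gt0.
  move/cvgrPdist_le : f_cvg => /(_ eps eps_gt0); apply: filterS => h.
  apply: le_trans; have := mx_entry_le_norm (df - h^-1 *: (f (h *: 1 + t) - f t)) i j.
  by rewrite !mxE.
apply: DeriveDef; first by apply/cvg_ex; exists (df i j).
exact: cvg_lim fij_cvg.
Qed.

Lemma is_derive_mulmx_entry m n (A : 'M[R]_(m, n)) (f : R -> 'cV[R]_n) df t i :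
  is_derive t (1:R) f df -> is_derive t (1:R) (fun s => (A *m f s) i 0) ((A *m df) i 0).
Proof.
move=> f_df; under [fun s => _]funext => s do rewrite mxE.
rewrite mxE; apply: is_derive_sumseq => l.
have := is_deriveM (is_derive_cst (A i l) t 1) (is_derive_mx_entry l 0 f_df).
by rewrite scaler0 addr0.
Qed.

Lemma mulmx_entry_le m n (A : 'M[R]_(m, n)) (v : 'cV[R]_n) B i :
  (forall l, `|v l 0| <= B) -> `|(A *m v) i 0| <= (\sum_l `|A i l|) * B.
Proof.
move=> vB; rewrite mxE mulr_suml; apply: le_trans (ler_norm_sum _ _ _) _.
by apply: ler_sum => l _; rewrite normrM ler_wpM2l.
Qed.

Lemma mulmx_norm_le m n (A : 'M[R]_(m, n)) (v : 'cV[R]_n) B : 0 <= B ->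
  (forall l, `|v l 0| <= B) -> `|A *m v| <= (\sum_i \sum_l `|A i l|) * B.
Proof.
move=> B_ge0 vB; apply: mx_norm_le => [|i j].
  by apply: mulr_ge0 => //; apply: sumr_ge0 => i _; exact: sumr_ge0.
rewrite (ord1 j); apply: le_trans (mulmx_entry_le A i vB) _.
apply: ler_wpM2r => //; apply: (@ler_sum_term _ _ (fun i => \sum_l `|A i l|)) => i'.
exact: sumr_ge0.
Qed.

Lemma exp_decay_eq0 (d C lam : R) : 0 < lam ->
  (forall t, 0 <= t -> `|d| <= C * expR (- (lam * t))) -> d = 0.
Proof.
move=> lam_gt0 dC; apply/eqP; rewrite -normr_eq0; apply/negPn/negP => d_neq0.
have d_gt0 : 0 < `|d| by rewrite lt0r d_neq0 normr_ge0.
have C_gt0 : 0 < C by have := dC 0 (lexx 0); rewrite mulr0 oppr0 expR0 mulr1; exact: lt_le_trans.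
pose t := C / (lam * `|d|).
have : `|d| <= C * expR (- (lam * t)) by apply: dC; rewrite divr_ge0 ?ltW ?mulr_gt0.
have -> : lam * t = C / `|d| by rewrite /t; field; rewrite ?gt_eqF.
rewrite expRN => d_le.
have : `|d| * expR (C / `|d|) <= C by rewrite -ler_pdivlMr ?expR_gt0.
have : `|d| * (1 + C / `|d|) <= `|d| * expR (C / `|d|) by rewrite ler_pM2l // expR_ge1Dx.
have -> : `|d| * (1 + C / `|d|) = `|d| + C by field; rewrite gt_eqF.
lra.
Qed.

End MatrixAnalysis.

Section PointGroup.
Variables (R : realType) (k : nat) (G : seq 'M[R]_k).
Hypothesis G_pg : point_group G.

Lemma point_group1 : 1%:M \in G.
Proof. by case: G_pg. Qed.

Lemma point_groupM A B : A \in G -> B \in G -> A *m B \in G.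
Proof. by case: G_pg => _ GM _ _; exact: GM. Qed.

Lemma point_groupV A : A \in G -> invmx A \in G.
Proof. by case: G_pg => _ _ GV _; exact: GV. Qed.

Lemma point_group_orthogonal A : A \in G -> A^T *m A = 1%:M.
Proof. by case: G_pg => _ _ _ GT /GT /mulmx1C. Qed.

Lemma point_group_unit A : A \in G -> A \in unitmx.
Proof. by case: G_pg => _ _ _ GT /GT /mulmx1_unit []. Qed.

End PointGroup.

Section SemiWalks.
Variables (R : realType) (N k : nat) (e : rel 'I_N) (rho : 'I_N -> 'I_N -> 'M[R]_k).
Implicit Types (u : 'I_N) (s : seq ('I_N * bool)).

Lemma semiwalk_ok_cat u s1 s2 :
  semiwalk_ok e u (s1 ++ s2) = semiwalk_ok e u s1 && semiwalk_ok e (sw_end u s1) s2.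
Proof. by elim: s1 u => [|[v b] s1 IHs] u //=; rewrite IHs andbA. Qed.

Lemma sw_end_cons u v b s : sw_end u ((v, b) :: s) = sw_end v s.
Proof. by []. Qed.

Lemma sw_end_cat u s1 s2 : sw_end u (s1 ++ s2) = sw_end (sw_end u s1) s2.
Proof. by rewrite /sw_end map_cat last_cat. Qed.

Lemma sw_volt_cat u s1 s2 :
  sw_volt rho u (s1 ++ s2) = sw_volt rho u s1 *m sw_volt rho (sw_end u s1) s2.
Proof.
elim: s1 u => [|[v b] s1 IHs] u /=; first by rewrite mul1mx.
by rewrite IHs mulmxA.
Qed.

Lemma sw_volt_in (G : seq 'M[R]_k) u s : point_group G ->
  (forall i j, e i j -> rho i j \in G) -> semiwalk_ok e u s -> sw_volt rho u s \in G.
Proof.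
move=> G_pg rho_G; elim: s u => [|[v b] s IHs] u /=; first by rewrite point_group1.
case/andP=> edge ok; apply: point_groupM (IHs _ ok) => //.
by case: b edge => /rho_G //; exact: point_groupV.
Qed.

Fixpoint sw_rev u s : seq ('I_N * bool) :=
  match s with
  | [::] => [::]
  | (v, b) :: s' => rcons (sw_rev v s') (u, ~~ b)
  end.

Lemma sw_end_rev u s : sw_end (sw_end u s) (sw_rev u s) = u.
Proof. by elim: s u => [|[v b] s IHs] u //=; rewrite -cats1 sw_end_cat (sw_end_cons u) IHs. Qed.

Lemma semiwalk_ok_rev u s : semiwalk_ok e u s -> semiwalk_ok e (sw_end u s) (sw_rev u s).
Proof.
elim: s u => [|[v b] s IHs] u //= /andP[edge ok].
rewrite -cats1 semiwalk_ok_cat (sw_end_cons u) IHs //= sw_end_rev andbT.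
by case: b edge.
Qed.

Hypothesis rho_unit : forall i j, e i j -> rho i j \in unitmx.

Lemma sw_volt_rev_mul u s : semiwalk_ok e u s ->
  sw_volt rho u s *m sw_volt rho (sw_end u s) (sw_rev u s) = 1%:M.
Proof.
elim: s u => [|[v b] s IHs] u /=; first by rewrite mul1mx.
case/andP=> edge ok; rewrite (sw_end_cons u) -cats1 sw_volt_cat sw_end_rev /= mulmx1.
rewrite -mulmxA (mulmxA (sw_volt rho v s)) IHs // mul1mx.
by case: b edge => /= /rho_unit; [exact: mulmxV | exact: mulVmx].
Qed.

Lemma sw_volt_rev u s : semiwalk_ok e u s ->
  sw_volt rho (sw_end u s) (sw_rev u s) = invmx (sw_volt rho u s).
Proof.
move=> ok; have prod1 := sw_volt_rev_mul ok; have [unit_s _] := mulmx1_unit prod1.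
by rewrite -[LHS]mul1mx -(mulVmx unit_s) -mulmxA prod1 mulmx1.
Qed.
End SemiWalks.

Section Lift.
Variables (R : realType) (N k : nat) (e : rel 'I_N) (rho : 'I_N -> 'I_N -> 'M[R]_k).
Variables (G : seq 'M[R]_k) (a : 'I_N -> 'I_N -> R) (x : 'I_N -> R -> 'cV[R]_k).
Hypothesis G_pg : point_group G.
Hypothesis rho_G : forall i j, e i j -> rho i j \in G.
Hypothesis a_gt0 : forall i j, e i j -> 0 < a i j.
Hypothesis x_sol : forall i t, is_derive t (1 : R) (x i)
  (\sum_(j | e i j) a i j *: (rho i j *m x j t - x i t)).
Variables (r : 'I_N) (to_root : 'I_N -> seq ('I_N * bool)).
Hypothesis to_root_walk : forall i,
  [/\ semiwalk_ok e i (to_root i), is_walk (to_root i) & sw_end i (to_root i) = r].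
Hypothesis local_directed : forall A, local_group e rho r A -> dlocal_group e rho r A.

Local Notation Gr := (local_group e rho r).

Lemma rho_unit i j : e i j -> rho i j \in unitmx.
Proof. by move/rho_G; exact: point_group_unit. Qed.

Lemma to_root_ok i : semiwalk_ok e i (to_root i). Proof. by case: (to_root_walk i). Qed.
Lemma to_root_is_walk i : is_walk (to_root i). Proof. by case: (to_root_walk i). Qed.
Lemma to_root_end i : sw_end i (to_root i) = r. Proof. by case: (to_root_walk i). Qed.

Definition root_volt i := sw_volt rho i (to_root i).
Definition loop_volt i j := invmx (root_volt i) *m rho i j *m root_volt j.
Definition from_root i := sw_rev i (to_root i).

Lemma root_volt_in i : root_volt i \in G.
Proof. exact/(sw_volt_in G_pg rho_G)/to_root_ok. Qed.

Lemma root_volt_unit i : root_volt i \in unitmx.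
Proof. exact/(point_group_unit G_pg)/root_volt_in. Qed.

Lemma from_root_ok i : semiwalk_ok e r (from_root i).
Proof. by rewrite -(to_root_end i) semiwalk_ok_rev ?to_root_ok. Qed.

Lemma from_root_end i : sw_end r (from_root i) = i.
Proof. by rewrite -{1}(to_root_end i) sw_end_rev. Qed.

Lemma from_root_volt i : sw_volt rho r (from_root i) = invmx (root_volt i).
Proof. by rewrite -{1}(to_root_end i) (sw_volt_rev rho_unit (to_root_ok i)). Qed.

Lemma local_group_in A : Gr A -> A \in G.
Proof. by case=> s [ok _ <-]; exact: sw_volt_in ok. Qed.

Lemma local_group1 : Gr 1%:M.
Proof. by exists [::]. Qed.

Lemma local_groupM A B : Gr A -> Gr B -> Gr (A *m B).
Proof.
case=> s1 [ok1 end1 <-] [s2 [ok2 end2 <-]]; exists (s1 ++ s2).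
by rewrite semiwalk_ok_cat sw_end_cat sw_volt_cat end1 ok1 ok2 end2.
Qed.

Lemma local_groupV A : Gr A -> Gr (invmx A).
Proof.
case=> s [ok end_s <-]; exists (sw_rev r s).
have := semiwalk_ok_rev ok; have := sw_end_rev r s; have := sw_volt_rev rho_unit ok.
by rewrite end_s.
Qed.

Lemma local_group_conj i s : semiwalk_ok e i s -> sw_end i s = i ->
  Gr (invmx (root_volt i) *m sw_volt rho i s *m root_volt i).
Proof.
move=> ok end_s; exists (from_root i ++ (s ++ to_root i)).
rewrite !semiwalk_ok_cat !sw_end_cat !sw_volt_cat from_root_ok from_root_end ok end_s.
by rewrite to_root_ok to_root_end from_root_volt mulmxA.
Qed.

Lemma loop_volt_local i j : e i j -> Gr (loop_volt i j).
Proof.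
move=> eij; exists (from_root i ++ (j, true) :: to_root j).
rewrite semiwalk_ok_cat sw_end_cat sw_volt_cat from_root_ok from_root_end sw_end_cons /= eij.
by rewrite to_root_ok to_root_end from_root_volt mulmxA.
Qed.

Lemma root_volt_local : Gr (root_volt r).
Proof. by exists (to_root r); rewrite to_root_ok to_root_end. Qed.

Definition Gr_seq := [seq A <- G | `[< Gr A >]].

Lemma Gr_seqP A : reflect (Gr A) (A \in Gr_seq).
Proof.
rewrite mem_filter; apply: (iffP andP) => [[/asboolP]//|GrA].
by split; [exact/asboolP | exact: local_group_in].
Qed.

Definition label := seq_sub Gr_seq.

Lemma label_local (g : label) : Gr (val g).
Proof. exact/Gr_seqP/valP. Qed.

Definition label1 : label := SeqSub (introT (Gr_seqP _) local_group1).

Definition lift_weight (n : 'I_N * label) j := if e n.1 j then a n.1 j else 0.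

Definition lift_next (n : 'I_N * label) j : 'I_N * label :=
  if e n.1 j then (j, insubd n.2 (val n.2 *m loop_volt n.1 j)) else n.

Definition lift_state c (n : 'I_N * label) t :=
  (val n.2 *m invmx (root_volt n.1) *m x n.1 t) c 0.

Lemma lift_weight_ge0 n j : 0 <= lift_weight n j.
Proof. by rewrite /lift_weight; case: ifP => // /a_gt0/ltW. Qed.

Lemma val_lift_next (g : label) i j : e i j ->
  val (insubd g (val g *m loop_volt i j)) = val g *m loop_volt i j.
Proof.
move=> eij; apply: insubdK; apply/Gr_seqP.
exact: local_groupM (label_local g) (loop_volt_local eij).
Qed.

Lemma loop_volt_root i j : loop_volt i j *m invmx (root_volt j) = invmx (root_volt i) *m rho i j.
Proof. by rewrite /loop_volt mulmxK // root_volt_unit. Qed.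

Lemma lift_sol c : consensus_sol lift_weight lift_next (lift_state c).
Proof.
move=> [i g] t /=.
have := is_derive_mulmx_entry (val g *m invmx (root_volt i)) c (x_sol i t).
suff -> : ((val g *m invmx (root_volt i)) *m
           \sum_(j | e i j) a i j *: (rho i j *m x j t - x i t)) c 0 =
          \sum_j lift_weight (i, g) j *
            (lift_state c (lift_next (i, g) j) t - lift_state c (i, g) t) by [].
rewrite [RHS](bigID (e i)) /= [X in _ = _ + X]big1 ?addr0; last first.
  by move=> j /negbTE eij; rewrite /lift_weight /= eij mul0r.
rewrite mulmx_sumr summxE; apply: eq_bigr => j eij.
rewrite /lift_weight /lift_next /lift_state /= eij val_lift_next //.
rewrite -scalemxAr mxE mulmxBr mxE [X in _ * (_ + X) = _]mxE /=; congr (_ * (_ - _)).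
by rewrite -(mulmxA (val g) (loop_volt i j)) loop_volt_root !mulmxA.
Qed.

Lemma lift_reach_walk s : forall u (g g' : label), semiwalk_ok e u s -> is_walk s ->
  val g' = val g *m invmx (root_volt u) *m sw_volt rho u s *m root_volt (sw_end u s) ->
  reachn lift_weight lift_next (sw_end u s, g') (size s) (u, g).
Proof.
elim: s => [|[j b] s IHs] u g g' /=.
  by move=> _ _; rewrite /sw_end /= mulmx1 mulmxKV ?root_volt_unit // => /val_inj ->.
move=> /andP[edge ok] /andP[/= b_true walk]; rewrite b_true in edge * => g'_def.
exists j; split; first by rewrite /lift_weight /= edge a_gt0.
rewrite /lift_next /= edge sw_end_cons; apply: IHs => //.
by rewrite val_lift_next //= g'_def -(mulmxA (val g) (loop_volt u j)) loop_volt_root !mulmxA.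
Qed.

Lemma lift_reach n : exists l, reachn lift_weight lift_next (r, label1) l n.
Proof.
case: n => i g.
have g_unit : val g \in unitmx := point_group_unit G_pg (local_group_in (label_local g)).
have Gr_back : Gr (invmx (val g) *m invmx (root_volt r)).
  by apply: local_groupM; apply: local_groupV; [exact: label_local | exact: root_volt_local].
(* This is where G_r = G_r^* enters. *)
have [c [ok_c walk_c end_c volt_c]] := local_directed Gr_back.
exists (size (to_root i ++ c)).
have end_ic : sw_end i (to_root i ++ c) = r by rewrite sw_end_cat to_root_end end_c.
rewrite -[in X in reachn _ _ X _ _]end_ic; apply: lift_reach_walk.
- by rewrite semiwalk_ok_cat to_root_ok to_root_end ok_c.
- by rewrite /is_walk all_cat; apply/andP; split; [exact: to_root_is_walk | exact: walk_c].
rewrite end_ic sw_volt_cat to_root_end volt_c /= -/(root_volt i) !mulmxA.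
by rewrite (mulmxKV (root_volt_unit i)) mulmxV // mul1mx mulVmx // root_volt_unit.
Qed.

Lemma lift_cvg : exists (u : 'cV[R]_k) (C lam : R), [/\ 0 <= C, 0 < lam &
  forall c n t, 0 <= t -> `|lift_state c n t - u c 0| <= C * expR (- (lam * t))].
Proof.
have cvg c : exists p : R * R * R, 0 < p.2 /\
    forall n t, 0 <= t -> `|lift_state c n t - p.1.1| <= p.1.2 * expR (- (p.2 * t)).
  have [l [C [lam [lam_gt0 cvg]]]] := consensus lift_weight_ge0 (lift_sol c) lift_reach.
  by exists (l, C, lam).
have [F F_cvg] := boolp.choice cvg.
pose C := \big[Num.max/0]_c (F c).1.2; pose lam := \big[Num.min/1]_c (F c).2.
have C_ge0 : 0 <= C by exact: bigmax_ge_id.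
exists (\col_c (F c).1.1), C, lam; split => //.
  by apply: lt_bigmin => // c _; case: (F_cvg c).
move=> c n t t_ge0; rewrite mxE; have [_ cvg_c] := F_cvg c.
apply: le_trans (cvg_c n t t_ge0) _.
have C_ge : (F c).1.2 <= C := le_bigmax 0 (fun c => (F c).1.2) c.
have : expR (- ((F c).2 * t)) <= expR (- (lam * t)).
  by rewrite ler_expR lerN2 ler_wpM2r // (bigmin_le 1 c (fun c => (F c).2)).
have := expR_gt0 (- ((F c).2 * t)); nra.
Qed.

Lemma lift_limit_fixed (u : 'cV[R]_k) C lam : 0 < lam ->
  (forall c n t, 0 <= t -> `|lift_state c n t - u c 0| <= C * expR (- (lam * t))) ->
  forall A, Gr A -> A *m u = u.
Proof.
move=> lam_gt0 cvg A GrA; apply/matrixP => c j; rewrite (ord1 j).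
apply/eqP; rewrite -subr_eq0; apply/eqP.
apply: (@exp_decay_eq0 _ _ ((\sum_l `|A c l|) * C + C) lam lam_gt0) => t t_ge0.
pose v := invmx (root_volt r) *m x r t.
have -> : (A *m u) c 0 - u c 0 = (A *m (u - v)) c 0 + ((A *m v) c 0 - u c 0).
  by rewrite mulmxBr mx_subE; ring.
rewrite mulrDl -mulrA; apply: le_trans (ler_normD _ _) _; apply: lerD.
  apply: mulmx_entry_le => l; rewrite mx_subE distrC.
  have cvg_l := cvg l (r, label1) t t_ge0.
  by rewrite /lift_state /= mul1mx in cvg_l.
have Av := cvg c (r, insubd label1 A) t t_ge0.
by rewrite /lift_state insubdK -?mulmxA in Av; last exact/Gr_seqP.
Qed.

Lemma voltage_consensus : exists (xs : 'I_N -> 'cV[R]_k) (C lam : R),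
  [/\ 0 < lam,
      (forall i t, 0 <= t -> `|x i t - xs i| <= C * expR (- (lam * t))),
      (forall i j, e i j -> xs i = rho i j *m xs j),
      (forall i j, (xs i)^T *m xs i = (xs j)^T *m xs j)
    & (forall i A, local_group e rho i A -> A *m xs i = xs i)].
Proof.
have [u [C [lam [C_ge0 lam_gt0 cvg]]]] := lift_cvg.
have fixed := lift_limit_fixed lam_gt0 cvg.
pose P := \sum_i \sum_c \sum_l `|root_volt i c l|.
exists (fun i => root_volt i *m u), (P * C), lam; split => //.
- move=> i t t_ge0.
  have -> : x i t - root_volt i *m u = root_volt i *m (invmx (root_volt i) *m x i t - u).
    by rewrite mulmxBr mulKVmx ?root_volt_unit.
  have bound : `|root_volt i *m (invmx (root_volt i) *m x i t - u)| <=
      (\sum_c \sum_l `|root_volt i c l|) * (C * expR (- (lam * t))).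
    apply: mulmx_norm_le => [|l]; first by rewrite mulr_ge0 // expR_ge0.
    have cvg_l := cvg l (i, label1) t t_ge0.
    by rewrite /lift_state /= mul1mx in cvg_l; rewrite mx_subE.
  rewrite -mulrA; apply: le_trans bound _; apply: ler_wpM2r; first by rewrite mulr_ge0 // expR_ge0.
  apply: (@ler_sum_term _ _ (fun i => \sum_c \sum_l `|root_volt i c l|)) => i'.
  by apply: sumr_ge0 => c _; exact: sumr_ge0.
- move=> i j eij; rewrite -{1}(fixed _ (loop_volt_local eij)) /loop_volt.
  by rewrite !mulmxA mulmxV ?root_volt_unit // mul1mx.
- move=> i j; rewrite !trmx_mul -!mulmxA !(mulmxA (root_volt _)^T).
  by rewrite !(point_group_orthogonal G_pg (root_volt_in _)) !mul1mx.
- move=> i A [s [ok end_s <-]]; rewrite -{2}(fixed _ (local_group_conj ok end_s)).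
  by rewrite !mulmxA mulmxV ?root_volt_unit // mul1mx.
Qed.
End Lift.

Unset Implicit Arguments.

Theorem theorem4 (R : realType) (N k : nat) (e : rel 'I_N)
  (rho : 'I_N -> 'I_N -> 'M[R]_k) (G : seq 'M[R]_k)
  (a : 'I_N -> 'I_N -> R)
  (x : 'I_N -> R -> 'cV[R]_k) :
  irreflexive e ->
  point_group G ->
  (forall i j, e i j -> rho i j \in G) ->
  (forall i j, e i j -> 0 < a i j) ->
  (exists r, is_root e r /\
     (forall A, local_group e rho r A <-> dlocal_group e rho r A)) ->
  (forall i t, is_derive t (1 : R) (x i)
     (\sum_(j | e i j) a i j *: (rho i j *m x j t - x i t))) ->
  exists (xs : 'I_N -> 'cV[R]_k) (C lam : R),
    [/\ 0 < lam,
        (forall i t, 0 <= t -> `|x i t - xs i| <= C * expR (- (lam * t))),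
        (forall i j, e i j -> xs i = rho i j *m xs j),
        (forall i j, (xs i)^T *m xs i = (xs j)^T *m xs j)
      & (forall i A, local_group e rho i A -> A *m xs i = xs i)].
Proof.
move=> _ G_pg rho_G a_gt0 [r [root_r local_eq]] x_sol.
have walk_to_root i : exists s, [/\ semiwalk_ok e i s, is_walk s & sw_end i s = r].
  by have [s [ok walk _ end_s]] := root_r i; exists s.
have [to_root to_root_walk] := boolp.choice walk_to_root.
exact: (voltage_consensus G_pg rho_G a_gt0 x_sol to_root_walk (fun A => (local_eq A).1)).
Qed.
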